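(* For $i\in\{0,1\}$ let $f_i:(0,\infty)\to\mathbb R$ be bounded on $(0,a]$ for every $a>0$. Assume there are constants $p_0,p_1\in(0,1)$ and functions $\eta_i:(0,\infty)\to\mathbb R$ such that for all $x>0$ and $i\in\{0,1\}$ $$f_i(x)=f_i(xp_i)+f_{1-i}(x(1-p_i))+\eta_i(x).$$ If, as $x\to\infty$, $\eta_i(x)=O(x^{1-\alpha})$ for some $\alpha>0$ and both $i$, then $f_i(x)=O(x)$ for both $i\in\{0,1\}$. *)

From Stdlib Require Import Reals.
Open Scope R_scope.

Definition bigO_infty (g h : R -> R) : Prop :=
  exists C M : R, forall x : R, M <= x -> Rabs (g x) <= C * Rabs (h x).

Definition locally_bounded_pos (f : R -> R) : Prop :=
  forall a : R, 0 < a -> exists B : R, forall x : R, 0 < x <= a -> Rabs (f x) <= B.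

(** Take an exponent [b] with [1 - alpha <= b < 1] and [0 <= b]. Since
    [p^b + (1-p)^b > 1] for [0 < p < 1], the recursion turns a bound
    [|f_i(x)| <= A x - B x^b] at the two smaller arguments [x p_i] and
    [x (1 - p_i)] into the same bound at [x], with a margin
    [B x^b (p^b + (1-p)^b - 1)] that absorbs the error [|eta_i(x)| <= K x^b]
    once [B] is large. Local boundedness gives the bound on a base interval
    [[L m, L]], and induction over intervals of fixed length extends it to all
    [x >= L m]; dropping [- B x^b] leaves [|f_i(x)| <= A x]. *)

From Stdlib Require Import Reals Lra.
Open Scope R_scope.

Lemma Rpower_pos x b : 0 < Rpower x b.
Proof. apply exp_pos. Qed.

Lemma Rpower_gt_base p b : 0 < p < 1 -> b < 1 -> p < Rpower p b.
Proof.
  intros Hp Hb.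
  assert (Hln : ln p < 0) by (rewrite <- ln_1; apply ln_increasing; lra).
  unfold Rpower; rewrite <- (exp_ln p) at 1 by lra.
  apply exp_increasing; nra.
Qed.

Lemma Rpower_le_1_plus x b : 0 < x -> 0 <= b <= 1 -> Rpower x b <= 1 + x.
Proof.
  intros Hx Hb; destruct (Rle_lt_dec x 1) as [Hx1 | Hx1].
  - assert (H1 : Rpower 1 b = 1)
      by (unfold Rpower; rewrite ln_1, Rmult_0_r; apply exp_0).
    assert (Rpower x b <= Rpower 1 b) by (apply Rle_Rpower_l; lra).
    lra.
  - assert (Rpower x b <= Rpower x 1) by (apply Rle_Rpower; lra).
    rewrite Rpower_1 in * by lra; lra.
Qed.

Lemma Rpower_split_sum_gt1 p b :
  0 < p < 1 -> b < 1 -> 1 < Rpower p b + Rpower (1 - p) b.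
Proof.
  intros Hp Hb.
  pose proof (Rpower_gt_base p b Hp Hb).
  pose proof (Rpower_gt_base (1 - p) b ltac:(lra) Hb).
  lra.
Qed.

Lemma bigO_Rpower_weaken (g : R -> R) a b :
  a <= b -> bigO_infty g (fun x => Rpower x a) ->
  exists K M, 0 <= K /\ 1 <= M /\
    forall x, M <= x -> Rabs (g x) <= K * Rpower x b.
Proof.
  intros Hab [C [M HC]].
  exists (Rabs C), (Rmax M 1); split; [apply Rabs_pos | split; [apply Rmax_r |]].
  intros x Hx.
  pose proof (Rmax_l M 1); pose proof (Rmax_r M 1).
  specialize (HC x ltac:(lra)).
  rewrite (Rabs_pos_eq (Rpower x a)) in HC by (left; apply Rpower_pos).
  assert (Rpower x a <= Rpower x b) by (apply Rle_Rpower; lra).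
  pose proof (Rle_abs C); pose proof (Rabs_pos C); pose proof (Rpower_pos x a).
  nra.
Qed.

Lemma bigO_Rpower_weaken_bool (eta : bool -> R -> R) a b :
  a <= b -> (forall i, bigO_infty (eta i) (fun x => Rpower x a)) ->
  exists K M, 0 <= K /\ 1 <= M /\
    forall i x, M <= x -> Rabs (eta i x) <= K * Rpower x b.
Proof.
  intros Hab HO.
  destruct (bigO_Rpower_weaken _ _ _ Hab (HO false)) as (K0 & M0 & HK0 & HM0 & H0).
  destruct (bigO_Rpower_weaken _ _ _ Hab (HO true)) as (K1 & M1 & HK1 & HM1 & H1).
  exists (Rmax K0 K1), (Rmax M0 M1).
  pose proof (Rmax_l K0 K1); pose proof (Rmax_r K0 K1).
  pose proof (Rmax_l M0 M1); pose proof (Rmax_r M0 M1).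
  split; [lra | split; [lra |]].
  intros i x Hx; pose proof (Rpower_pos x b).
  destruct i; [specialize (H1 x ltac:(lra)) | specialize (H0 x ltac:(lra))]; nra.
Qed.

Lemma locally_bounded_pos_bool (f : bool -> R -> R) a :
  (forall i, locally_bounded_pos (f i)) -> 0 < a ->
  exists G, 0 <= G /\ forall i x, 0 < x <= a -> Rabs (f i x) <= G.
Proof.
  intros Hf Ha.
  destruct (Hf false a Ha) as [G0 H0]; destruct (Hf true a Ha) as [G1 H1].
  exists (Rabs G0 + Rabs G1).
  pose proof (Rle_abs G0); pose proof (Rle_abs G1).
  pose proof (Rabs_pos G0); pose proof (Rabs_pos G1).
  split; [lra |].
  intros [] x Hx; [specialize (H1 x Hx) | specialize (H0 x Hx)]; lra.
Qed.

Lemma split_ratios_bounded (p : bool -> R) :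
  (forall i, 0 < p i < 1) ->
  exists m r, 0 < m /\ r < 1 /\ forall i, m <= p i <= r /\ m <= 1 - p i <= r.
Proof.
  intros Hp; pose proof (Hp false); pose proof (Hp true).
  exists (Rmin (Rmin (p false) (1 - p false)) (Rmin (p true) (1 - p true))),
         (Rmax (Rmax (p false) (1 - p false)) (Rmax (p true) (1 - p true))).
  pose proof (Rmin_l (Rmin (p false) (1 - p false)) (Rmin (p true) (1 - p true))).
  pose proof (Rmin_r (Rmin (p false) (1 - p false)) (Rmin (p true) (1 - p true))).
  pose proof (Rmax_l (Rmax (p false) (1 - p false)) (Rmax (p true) (1 - p true))).
  pose proof (Rmax_r (Rmax (p false) (1 - p false)) (Rmax (p true) (1 - p true))).
  pose proof (Rmin_l (p false) (1 - p false)); pose proof (Rmin_r (p false) (1 - p false)).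
  pose proof (Rmin_l (p true) (1 - p true)); pose proof (Rmin_r (p true) (1 - p true)).
  pose proof (Rmax_l (p false) (1 - p false)); pose proof (Rmax_r (p false) (1 - p false)).
  pose proof (Rmax_l (p true) (1 - p true)); pose proof (Rmax_r (p true) (1 - p true)).
  split; [repeat apply Rmin_glb_lt; lra |].
  split; [repeat apply Rmax_lub_lt; lra |].
  intros []; lra.
Qed.

Lemma margin_coefficient (K : R) (c : bool -> R) :
  0 <= K -> (forall i, 1 < c i) ->
  exists B, 0 <= B /\ forall i, K <= B * (c i - 1).
Proof.
  intros HK Hc.
  set (cmin := Rmin (c false) (c true)).
  assert (Hcmin : 1 < cmin) by (apply Rmin_glb_lt; apply Hc).
  assert (Hle : forall i, cmin <= c i)
    by (intros []; [apply Rmin_r | apply Rmin_l]).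
  exists (K / (cmin - 1)).
  assert (HB : 0 <= K / (cmin - 1))
    by (apply Rmult_le_pos; [lra | left; apply Rinv_0_lt_compat; lra]).
  split; [exact HB |].
  intros i; specialize (Hle i).
  assert (K / (cmin - 1) * (cmin - 1) = K) by (field; lra).
  nra.
Qed.

Lemma linear_minus_power_step (u v e x q A B K b : R) :
  0 < x -> 0 < q < 1 ->
  K <= B * (Rpower q b + Rpower (1 - q) b - 1) ->
  Rabs u <= A * (x * q) - B * Rpower (x * q) b ->
  Rabs v <= A * (x * (1 - q)) - B * Rpower (x * (1 - q)) b ->
  Rabs e <= K * Rpower x b ->
  Rabs (u + v + e) <= A * x - B * Rpower x b.
Proof.
  intros Hx Hq HK Hu Hv He.
  rewrite <- Rpower_mult_distr in Hu, Hv by lra.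
  assert (Hmargin :
    K * Rpower x b <= B * (Rpower q b + Rpower (1 - q) b - 1) * Rpower x b)
    by (apply Rmult_le_compat_r; [left; apply Rpower_pos | exact HK]).
  pose proof (Rabs_triang (u + v) e); pose proof (Rabs_triang u v).
  lra.
Qed.

Section LinearGrowth.

Variables (f eta : bool -> R -> R) (p : bool -> R).
Hypothesis p_range : forall i, 0 < p i < 1.
Hypothesis f_rec : forall i x, 0 < x ->
  f i x = f i (x * p i) + f (negb i) (x * (1 - p i)) + eta i x.

Lemma linear_minus_power_bound_intervals (A B K b m r L : R) :
  0 < m -> r < 1 -> 0 < L ->
  (forall i, m <= p i <= r /\ m <= 1 - p i <= r) ->
  (forall i, K <= B * (Rpower (p i) b + Rpower (1 - p i) b - 1)) ->
  (forall i x, L <= x -> Rabs (eta i x) <= K * Rpower x b) ->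
  (forall i x, L * m <= x <= L -> Rabs (f i x) <= A * x - B * Rpower x b) ->
  forall n i x, L * m <= x <= L + INR n * ((1 - r) * L) ->
    Rabs (f i x) <= A * x - B * Rpower x b.
Proof.
  intros Hm Hr HL Hratio HK Heta Hbase n.
  induction n as [| n IH]; intros i x Hx.
  - apply Hbase; simpl in Hx; lra.
  - rewrite S_INR in Hx.
    destruct (Rle_lt_dec x L) as [HxL | HxL]; [apply Hbase; lra |].
    destruct (Hratio i) as [[Hmp Hpr] [Hmq Hqr]].
    assert (Hshrunk : forall q, m <= q <= r ->
      L * m <= x * q <= L + INR n * ((1 - r) * L)).
    { intros q Hq; pose proof (pos_INR n); split; [nra |].
      assert (x * q <= r * x) by nra.
      (* [r (L + (n+1)(1-r)L) <= L + n (1-r) L] reduces to [r (n+1) <= n + 1]. *)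
      assert (r * x <= r * (L + (INR n + 1) * ((1 - r) * L))) by nra.
      nra. }
    rewrite (f_rec i x) by lra.
    apply (linear_minus_power_step _ _ _ x (p i) A B K b).
    + lra.
    + apply p_range.
    + apply HK.
    + apply IH, Hshrunk; lra.
    + apply IH, Hshrunk; lra.
    + apply Heta; lra.
Qed.

Hypothesis f_bounded : forall i, locally_bounded_pos (f i).

Lemma recurrence_linear_growth (b K M : R) :
  0 <= b < 1 -> 0 <= K -> 0 < M ->
  (forall i x, M <= x -> Rabs (eta i x) <= K * Rpower x b) ->
  forall i, bigO_infty (f i) (fun x => x).
Proof.
  intros Hb HK HM Heta i.
  destruct (split_ratios_bounded p p_range) as (m & r & Hm & Hr & Hratio).
  destruct (margin_coefficient K (fun i => Rpower (p i) b + Rpower (1 - p i) b) HK)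
    as (B & HB & HKB).
  { intros j; apply Rpower_split_sum_gt1; [apply p_range | lra]. }
  destruct (locally_bounded_pos_bool f M f_bounded ltac:(lra)) as (G & HG & HfG).
  assert (HMm : 0 < M * m) by nra.
  set (A := (G + B * (1 + M)) / (M * m)).
  assert (HA : A * (M * m) = G + B * (1 + M)) by (unfold A; field; lra).
  assert (HA0 : 0 <= A).
  { apply Rmult_le_pos; [nra | left; apply Rinv_0_lt_compat; lra]. }
  assert (Hbase : forall j x, M * m <= x <= M ->
            Rabs (f j x) <= A * x - B * Rpower x b).
  { intros j x Hx.
    pose proof (HfG j x ltac:(lra)).
    pose proof (Rpower_le_1_plus x b ltac:(lra) ltac:(lra)).
    nra. }
  exists A, M; intros x Hx.
  destruct (INR_archimed ((1 - r) * M) x ltac:(nra)) as [n Hn].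
  assert (Hm1 : m < 1) by (destruct (Hratio i), (p_range i); lra).
  assert (Hx_range : M * m <= x <= M + INR n * ((1 - r) * M)) by nra.
  assert (Hbound := linear_minus_power_bound_intervals A B K b m r M
                      Hm Hr ltac:(lra) Hratio HKB Heta Hbase n i x Hx_range).
  pose proof (Rpower_pos x b).
  rewrite (Rabs_pos_eq x) by lra.
  nra.
Qed.

End LinearGrowth.

Theorem lemma6p7 (f eta : bool -> R -> R) (p : bool -> R) (alpha : R) :
  (forall i, locally_bounded_pos (f i)) ->
  (forall i, 0 < p i < 1) ->
  (forall i x, 0 < x ->
     f i x = f i (x * p i) + f (negb i) (x * (1 - p i)) + eta i x) ->
  0 < alpha ->
  (forall i, bigO_infty (eta i) (fun x => Rpower x (1 - alpha))) ->
  forall i, bigO_infty (f i) (fun x => x).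
Proof.
  intros Hf Hp Hrec Halpha Heta.
  set (b := Rmax (1 - alpha) 0).
  assert (Hb : 0 <= b < 1).
  { split; [apply Rmax_r | apply Rmax_lub_lt; lra]. }
  destruct (bigO_Rpower_weaken_bool eta (1 - alpha) b (Rmax_l _ _) Heta)
    as (K & M & HK & HM & HetaK).
  exact (recurrence_linear_growth f eta p Hp Hrec Hf b K M Hb HK ltac:(lra) HetaK).
Qed.
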